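(* Let $H$ be a complex Hilbert space, $\alpha$ a state on $H$ and $A$ an observable on $H$ with outcome space $(\Omega_A,\mathcal{F}_A)$. Let $\mathcal{I}=\mathcal{H}_{(\alpha,A)}$ be the Holevo instrument $\mathcal{H}_{(\alpha,A)}(\Delta)(\rho)=\mathrm{tr}[\rho A(\Delta)]\alpha$. Then $\mathcal{U}_\mathcal{I}=\{\mathcal{I}_a^*\colon a\in\mathcal{E}(H)\}$ is a $Sob$ effect algebra.
   Context: $\mathcal{E}(H)$ is the set of effects ($0\le a\le I$); states are effects of trace one. A sub-observable with outcome space $(\Omega,\mathcal{F})$ is a map $\mathcal{F}\to\mathcal{E}(H)$ countably additive in the strong operator topology; it is an observable if its value at $\Omega$ is $I$; $Sob(H)$ is the set of sub-observables, with pointwise sums and differences. For an instrument $\mathcal{I}$ (operation-valued measure with $\mathcal{I}(\Omega_\mathcal{I})$ trace preserving), the dual $\mathcal{I}^*(\Delta)$ is defined by $\mathrm{tr}[\rho\,\mathcal{I}^*(\Delta)(B)]=\mathrm{tr}[\mathcal{I}(\Delta)(\rho)B]$ for all states $\rho$ and bounded $B$, and $\mathcal{I}_a^*(\Delta)=\mathcal{I}^*(\Delta)(a)$ (for the Holevo instrument, $\mathcal{I}_a^*(\Delta)=\mathrm{tr}(\alpha a)A(\Delta)$). A subset $\mathcal{U}\subseteq Sob(H)$ all of whose elements have the same outcome space is a $Sob$ effect algebra if: (S1) there is an observable $Z\in\mathcal{U}$; (S2) $A\in\mathcal{U}$ implies $Z-A\in\mathcal{U}$; (S3) $A,B\in\mathcal{U}$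 and $A+B\in Sob(H)$ imply $A+B\in\mathcal{U}$. *)

From HB Require Import structures.
From mathcomp Require Import all_boot all_order all_algebra.
From mathcomp Require Import complex.
From mathcomp Require Import boolp classical_sets reals measure.

Set Implicit Arguments.
Unset Strict Implicit.
Unset Printing Implicit Defensive.

Import Order.TTheory GRing.Theory Num.Theory.
Local Open Scope ring_scope.
Local Open Scope classical_set_scope.

Section Hilbert.
Variable R : realType.
Local Notation C := (R[i]).
Variable H : lmodType C.
(* inner product, linear in the second argument, antilinear in the first *)
Variable ip : H -> H -> C.

Definition hconv (u : nat -> H) (x : H) : Prop :=
  forall eps : C, 0 < eps -> exists N : nat, forall n : nat, (N <= n)%N ->
    ip (u n - x) (u n - x) < eps.

Definition hcauchy (u : nat -> H) : Prop :=
  forall eps : C, 0 < eps -> exists N : nat, forall n m : nat,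
    (N <= n)%N -> (N <= m)%N -> ip (u n - u m) (u n - u m) < eps.

Record is_hilbert : Prop := IsHilbert {
  ip_linr : forall (c : C) (x y z : H), ip x (c *: y + z) = c * ip x y + ip x z;
  ip_conj : forall x y : H, ip y x = conjc (ip x y);
  ip_ge0 : forall x : H, 0 <= ip x x;
  ip_eq0 : forall x : H, ip x x = 0 -> x = 0;
  ip_complete : forall u : nat -> H, hcauchy u -> exists x, hconv u x
}.

Definition linear_op (T : H -> H) : Prop :=
  forall (c : C) (x y : H), T (c *: x + y) = c *: T x + T y.

Definition bounded_op (T : H -> H) : Prop :=
  linear_op T /\ exists M : C, 0 <= M /\ forall x : H, ip (T x) (T x) <= M * ip x x.

Definition effect (a : H -> H) : Prop :=
  bounded_op a /\ forall x : H, 0 <= ip x (a x) /\ ip x (a x) <= ip x x.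

Definition onb (B : set H) : Prop :=
  (forall e, B e -> ip e e = 1) /\
  (forall e f, B e -> B f -> e <> f -> ip e f = 0) /\
  (forall x, (forall e, B e -> ip e x = 0) -> x = 0).

(* unconditional (net) summation of a family indexed by a set B of vectors *)
Definition has_sum (B : set H) (f : H -> C) (s : C) : Prop :=
  forall eps : C, 0 < eps -> exists s0 : seq H,
    uniq s0 /\ (forall e, e \in s0 -> B e) /\
    forall s1 : seq H, uniq s1 -> (forall e, e \in s0 -> e \in s1) ->
      (forall e, e \in s1 -> B e) -> `|\sum_(e <- s1) f e - s| < eps.

Definition trace_is (T : H -> H) (t : C) : Prop :=
  forall B : set H, onb B -> has_sum B (fun e => ip e (T e)) t.

(* states: positive (hence self-adjoint) trace-class operators of trace one *)
Definition state (alpha : H -> H) : Prop :=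
  bounded_op alpha /\ (forall x : H, 0 <= ip x (alpha x)) /\ trace_is alpha 1.

Variables (d : measure_display) (Omega : measurableType d).
Definition opmap := set Omega -> H -> H.

(* sub-observables: effect-valued, countably additive in the strong operator topology *)
Definition sub_observable (M : opmap) : Prop :=
  (forall D : set Omega, measurable D -> effect (M D)) /\
  (forall F : nat -> set Omega, (forall n, measurable (F n)) -> trivIset setT F ->
     forall x : H,
       hconv (fun N => \sum_(n < N) M (F n) x) (M (\bigcup_n F n) x)).

Definition observable (M : opmap) : Prop :=
  sub_observable M /\ M setT = id.

Definition opmap_add (M N : opmap) : opmap := fun D x => M D x + N D x.
Definition opmap_sub (M N : opmap) : opmap := fun D x => M D x - N D x.

Definition Sob_effect_algebra (U : set opmap) : Prop :=
  (forall M, U M -> sub_observable M) /\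
  exists Z : opmap, [/\ U Z, observable Z,
    (forall M, U M -> U (opmap_sub Z M)) &
    (forall M N, U M -> U N -> sub_observable (opmap_add M N) ->
       U (opmap_add M N))].

(* Dual of the Holevo instrument H_(alpha,A):  I_a^*(D) = tr(alpha a) A(D) *)
Definition holevo_dual_set (alpha : H -> H) (A : opmap) : set opmap :=
  [set M | exists a : H -> H, effect a /\
     exists t : C, trace_is (alpha \o a) t /\ M = (fun D x => t *: A D x)].

End Hilbert.

(* Every member of the set is tr(alpha a) A, so the effect-algebra axioms reduce to
   arithmetic on t = tr(alpha a): the unit comes from a = I, the complement of t A from
   I - a, and a sum t A + s A that is a sub-observable has t + s in [0, 1] (evaluate it
   at the whole space on a unit vector), so it comes from a = (t + s) I.  The substance
   is that 0 <= tr(alpha a) <= 1 for every effect a.  Since the trace is defined basis by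
   basis, this is read off in an eigenbasis of alpha, where the trace series of alpha a
   has terms lambda_e <e, a e> in [0, lambda_e] and the lambda_e sum to 1.

   Such an eigenbasis exists because alpha is positive with finite trace: a maximal
   orthonormal family E of eigenvectors is total.  Otherwise let K be its orthogonal
   complement, lambda the supremum of the Rayleigh quotient on K and T = alpha / lambda.
   The power iterates T^k v (v in K) converge to fixed points of T, since <v, T^j v> is
   nonincreasing in j.  If all these limits were 0, take a unit x in K with <x, T x>
   close to 1: by repeated Cauchy-Schwarz |T^(2^N) x|^2 >= <x, T x>^(2^(N+1)) >= 3/4,
   whereas splitting x along the finitely many basis vectors that carry all but 1/8 of
   the trace gives |T^(2^N) x|^2 <= 1/2 once N is large. *)

From HB Require Import structures.
From mathcomp Require Import all_boot all_order all_algebra.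
From mathcomp Require Import complex.
From mathcomp Require Import boolp classical_sets reals measure.
From mathcomp Require Import ring lra.

Set Implicit Arguments.
Unset Strict Implicit.
Unset Printing Implicit Defensive.

Import Order.TTheory GRing.Theory Num.Theory.
Local Open Scope ring_scope.
Local Open Scope classical_set_scope.
Local Open Scope complex_scope.

Lemma ge0_ReC (R : realType) (z : R[i]) : 0 <= z -> z = (complex.Re z)%:C.
Proof. by move/ger0_real/RRe_real. Qed.

Lemma ler_ReC (R : realType) (z w : R[i]) : z <= w -> complex.Re z <= complex.Re w.
Proof. by rewrite lecE => /andP[]. Qed.

Lemma conjc_ge0 (R : realType) (z : R[i]) : 0 <= z -> conjc z = z.
Proof. by move=> /ge0_ReC ->; rewrite conjc_real. Qed.

Lemma complex01_real (R : realType) (c : R[i]) :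
  0 <= c -> c <= 1 -> exists r : R, [/\ c = r%:C, 0 <= r & r <= 1].
Proof.
by move=> c0 c1; exists (complex.Re c); rewrite -ge0_ReC // -ler0c -lecR -ge0_ReC.
Qed.

Lemma ltC_parts (R : realType) (z : R[i]) (e : R) :
  `|z| < e%:C -> `|complex.Re z| < e /\ `|complex.Im z| < e.
Proof.
rewrite normc_def ltcR => lt_ze.
have sq0 : 0 <= complex.Re z ^+ 2 + complex.Im z ^+ 2 by rewrite addr_ge0 ?sqr_ge0.
by split; apply: le_lt_trans lt_ze; rewrite -sqrtr_sqr ler_sqrt // ?lerDl ?lerDr sqr_ge0.
Qed.

Lemma small_real_eq0 (R : realType) (x : R) : (forall e, 0 < e -> `|x| < e) -> x = 0.
Proof.
move=> small; apply/normr0_eq0/le_anti; rewrite normr_ge0 andbT.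
by apply/ler_addgt0Pr => e /small /ltW; rewrite add0r.
Qed.

Lemma le_approxC (R : realType) (a s : R[i]) :
  (forall e : R, 0 < e -> exists2 b, a <= b & `|b - s| < e%:C) -> a <= s.
Proof.
case: a s => [ar ai] [sr si] approx.
have near e : 0 < e -> `|si - ai| < e /\ ar <= sr + e.
  move=> /approx [[br bi]]; rewrite lecE /= => /andP[/eqP-> ab] /ltC_parts /=.
  by rewrite ltr_norml distrC => -[/andP[_ hi] near_i]; split=> //; lra.
rewrite lecE /=; apply/andP; split.
  by apply/eqP/subr0_eq/small_real_eq0 => e /near[].
by apply/ler_addgt0Pr => e /near[].
Qed.

Lemma ge_approxC (R : realType) (a s : R[i]) :
  (forall e : R, 0 < e -> exists2 b, b <= a & `|b - s| < e%:C) -> s <= a.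
Proof.
move=> approx; rewrite -lerN2; apply: le_approxC => e /approx[b ba bs].
by exists (- b); rewrite ?lerN2 // -opprD normrN.
Qed.

Lemma polar_eq0 (R : realType) (z w : R[i]) :
  z + w = 0 -> 'i * z + conjc 'i * w = 0 -> z = 0.
Proof.
case: z w => a b [c d] /eqP; rewrite eq_complex /= => /andP[/eqP h1 /eqP h2] /eqP.
rewrite eq_complex /=; simpc => /andP[/eqP h3 /eqP h4].
by apply/eqP; rewrite eq_complex /=; apply/andP; split; apply/eqP; lra.
Qed.

Lemma quadratic_ge0_le (R : realFieldType) (P Q a : R) : 0 <= Q -> 0 <= a ->
  (forall r, 0 <= P - 2 * r * a + r ^+ 2 * a * Q) -> a <= P * Q.
Proof.
move=> Q0 a0 quad; have P0 : 0 <= P by have := quad 0; lra.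
have [->|an0] := eqVneq a 0; first exact: mulr_ge0.
have [Qe|Qn0] := eqVneq Q 0.
  have := quad ((P + 1) / (2 * a)); rewrite Qe mulr0 addr0.
  have -> : 2 * ((P + 1) / (2 * a)) * a = P + 1 by field.
  lra.
have := quad Q^-1.
have -> : 2 * Q^-1 * a = 2 * a / Q by field.
have -> : Q^-1 ^+ 2 * a * Q = a / Q by field.
move=> h; have : 0 <= (P - a / Q) * Q by rewrite mulr_ge0 //; lra.
rewrite mulrBl mulrAC -mulrA divff // mulr1; lra.
Qed.

Lemma bernoulli_ineq (R : realFieldType) (eta : R) n :
  0 <= eta <= 1 -> 1 - n%:R * eta <= (1 - eta) ^+ n.
Proof.
move=> /andP[eta0 eta1]; elim: n => [|n IH]; first by rewrite mul0r subr0 expr0.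
have eta1' : 0 <= 1 - eta by lra.
have := ler_wpM2l eta1' IH; have : 0 <= n%:R * eta * eta by rewrite !mulr_ge0.
by rewrite exprS -addn1 natrD; nra.
Qed.

Lemma even_odd_ind (P : nat -> Prop) :
  (forall i, P (i + i)%N) -> (forall i, P (i + i).+1) -> forall j, P j.
Proof.
move=> Peven Podd j; rewrite -[j]odd_double_half -addnn.
by case: (odd j); [exact: Podd|exact: Peven].
Qed.

Lemma mem_cons_r (T : eqType) (a x : T) (s : seq T) : x \in s -> x \in a :: s.
Proof. by rewrite in_cons => ->; rewrite orbT. Qed.

Lemma eventually_seq (T : eqType) (s : seq T) (P : T -> nat -> Prop) :
  (forall f, f \in s -> exists N, forall k, (N <= k)%N -> P f k) ->
  exists N, forall f k, f \in s -> (N <= k)%N -> P f k.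
Proof.
elim: s => [|a s IH] ev; first by exists 0%N.
have [N1 ev1] := ev a (mem_head _ _).
have [N2 ev2] := IH (fun f fs => ev f (mem_cons_r a fs)).
exists (maxn N1 N2) => f k; rewrite in_cons geq_max => /orP[/eqP->|fs] /andP[k1 k2].
  exact: ev1.
exact: ev2.
Qed.

Lemma set_seq_cons (T : eqType) (a : T) (s : seq T) : [set` a :: s] = a |` [set` s].
Proof.
apply/funext => x; apply/propext; rewrite /= in_cons.
by split=> [/orP[/eqP|]|[->|->]]; [left|right|rewrite eqxx|rewrite orbT].
Qed.

Section HermitianForm.
Variables (R : realType) (H : lmodType R[i]).

Definition hermitian_psd (q : H -> H -> R[i]) :=
  [/\ forall (c : R[i]) (x y z : H), q x (c *: y + z) = c * q x y + q x z,
      forall x y : H, q y x = conjc (q x y) &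
      forall x : H, 0 <= q x x].

Variable q : H -> H -> R[i].
Hypothesis hq : hermitian_psd q.

Lemma formZDr c x y z : q x (c *: y + z) = c * q x y + q x z.
Proof. by case: hq. Qed.
Lemma form_conj x y : q y x = conjc (q x y).
Proof. by case: hq. Qed.
Lemma form_ge0 x : 0 <= q x x.
Proof. by case: hq. Qed.

Lemma formDr x y z : q x (y + z) = q x y + q x z.
Proof. by have := formZDr 1 x y z; rewrite scale1r mul1r. Qed.
Lemma form0r x : q x 0 = 0.
Proof. by apply/(addrI (q x 0)); rewrite addr0 -formDr addr0. Qed.
Lemma formZr x c y : q x (c *: y) = c * q x y.
Proof. by have := formZDr c x y 0; rewrite !addr0 form0r addr0. Qed.
Lemma formNr x y : q x (- y) = - q x y.
Proof. by rewrite -scaleN1r formZr mulN1r. Qed.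
Lemma formBr x y z : q x (y - z) = q x y - q x z.
Proof. by rewrite formDr formNr. Qed.
Lemma formDl x y z : q (x + y) z = q x z + q y z.
Proof. by rewrite form_conj formDr rmorphD /= -!form_conj. Qed.
Lemma formZl c x y : q (c *: x) y = conjc c * q x y.
Proof. by rewrite form_conj formZr rmorphM /= -form_conj. Qed.
Lemma form0l x : q 0 x = 0.
Proof. by rewrite form_conj form0r conjc0. Qed.
Lemma formNl x y : q (- x) y = - q x y.
Proof. by rewrite -scaleN1r formZl rmorphN1 mulN1r. Qed.
Lemma formBl x y z : q (x - y) z = q x z - q y z.
Proof. by rewrite formDl formNl. Qed.

Lemma form_sumr I (s : seq I) (F : I -> H) x :
  q x (\sum_(i <- s) F i) = \sum_(i <- s) q x (F i).
Proof. by elim: s => [|a s IH]; rewrite ?big_nil ?form0r // !big_cons formDr IH. Qed.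

Lemma form_suml I (s : seq I) (F : I -> H) x :
  q (\sum_(i <- s) F i) x = \sum_(i <- s) q (F i) x.
Proof. by elim: s => [|a s IH]; rewrite ?big_nil ?form0l // !big_cons formDl IH. Qed.

Lemma cauchy_schwarz x y : q x y * conjc (q x y) <= q x x * q y y.
Proof.
have -> : q x y * conjc (q x y) = q y x * conjc (q y x).
  by rewrite [q x y]form_conj conjcK mulrC.
set a := complex.Re (q y x * conjc (q y x)).
have a0 : 0 <= a by exact: (ler_ReC (mulcJ_ge0 _)).
have Q0 : 0 <= complex.Re (q y y) by rewrite -ler0c -ge0_ReC ?form_ge0.
have quad r : 0 <= complex.Re (q x x) - 2 * r * a + r ^+ 2 * a * complex.Re (q y y).
  have := form_ge0 (x - (r%:C * q y x) *: y).
  rewrite formBl !formBr !formZl !formZr [q x y]form_conj rmorphM /=.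
  rewrite (ge0_ReC (form_ge0 x)) (ge0_ReC (form_ge0 y)) /a.
  by case: (q y x) => u v; rewrite lecE /=; simpc => /andP[_]; lra.
rewrite (ge0_ReC (mulcJ_ge0 _)) (ge0_ReC (form_ge0 x)) (ge0_ReC (form_ge0 y)).
by rewrite -rmorphM lecR; exact: quadratic_ge0_le Q0 a0 quad.
Qed.

End HermitianForm.

Section HilbertSpace.
Variables (R : realType) (H : lmodType R[i]) (ip : H -> H -> R[i]).
Hypothesis hH : is_hilbert ip.

Lemma ip_psd : hermitian_psd ip.
Proof. by split; [exact: ip_linr hH | exact: ip_conj hH | exact: ip_ge0 hH]. Qed.
Local Notation hp := ip_psd.

Definition sqnorm x := complex.Re (ip x x).

Lemma sqnormE x : ip x x = (sqnorm x)%:C.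
Proof. exact/ge0_ReC/(form_ge0 hp). Qed.
Lemma sqnorm_ge0 x : 0 <= sqnorm x.
Proof. by rewrite -ler0c -sqnormE (form_ge0 hp). Qed.
Lemma sqnorm_eq0 x : sqnorm x = 0 -> x = 0.
Proof. by move=> x0; apply: (ip_eq0 hH); rewrite sqnormE x0. Qed.
Lemma sqnorm_gt0 x : x <> 0 -> 0 < sqnorm x.
Proof. by move=> x_neq0; rewrite lt_def sqnorm_ge0 // andbT; apply/eqP => /sqnorm_eq0. Qed.
Lemma sqnorm0 : sqnorm 0 = 0.
Proof. by rewrite /sqnorm (form0l hp). Qed.
Lemma sqnormN x : sqnorm (- x) = sqnorm x.
Proof. by rewrite /sqnorm (formNl hp) (formNr hp) opprK. Qed.
Lemma sqnormZ c x : sqnorm (c *: x) = complex.Re (c * conjc c) * sqnorm x.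
Proof.
rewrite /sqnorm (formZl hp) (formZr hp) sqnormE mulrCA mulrA.
by rewrite [c * _](ge0_ReC (mulcJ_ge0 c)); simpc.
Qed.

Lemma sqnormD_le x y : sqnorm (x + y) <= 2 * sqnorm x + 2 * sqnorm y.
Proof.
have parallelogram : ip (x + y) (x + y) + ip (x - y) (x - y) = 2 * ip x x + 2 * ip y y.
  by rewrite !(formDl hp) !(formNl hp) !(formDr hp) !(formNr hp); ring.
move: parallelogram; rewrite !sqnormE => /(congr1 (@complex.Re R)); simpc => /= eq.
have := sqnorm_ge0 (x - y); lra.
Qed.

Lemma sqnormB_le x y : sqnorm (x - y) <= 2 * sqnorm x + 2 * sqnorm y.
Proof. by have := sqnormD_le x (- y); rewrite sqnormN. Qed.

Lemma sqnorm_sum_le I (s : seq I) (w : I -> H) :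
  sqnorm (\sum_(i <- s) w i) <= 2 ^+ size s * \sum_(i <- s) sqnorm (w i).
Proof.
elim: s => [|a s IH]; first by rewrite !big_nil sqnorm0 mulr0.
rewrite !big_cons /=; apply: le_trans (sqnormD_le _ _) _.
have h1 := sqnorm_ge0 (w a).
have h2 : 0 <= \sum_(i <- s) sqnorm (w i) by rewrite sumr_ge0 // => i _; exact: sqnorm_ge0.
have h3 : 1 <= 2 ^+ size s :> R by rewrite exprn_ege1 // ler1n.
rewrite exprS; nra.
Qed.

Lemma hconvP u z : hconv ip u z <->
  forall e : R, 0 < e -> exists N, forall n, (N <= n)%N -> sqnorm (u n - z) < e.
Proof.
split=> [conv e e0|conv eps eps0].
  have e0' : 0 < e%:C by rewrite ltcR.
  by have [N hN] := conv _ e0'; exists N => n /hN; rewrite sqnormE ltcR.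
have Re_eps0 : 0 < complex.Re eps by move: eps0; rewrite ltcE => /andP[].
have [N hN] := conv _ Re_eps0.
by exists N => n /hN; rewrite -ltcR -sqnormE -ge0_ReC ?ltW.
Qed.

Lemma hcauchy_sqnorm u :
  (forall e : R, 0 < e -> exists N, forall n m, (N <= n)%N -> (N <= m)%N ->
     sqnorm (u n - u m) < e) -> hcauchy ip u.
Proof.
move=> cauchy eps eps0.
have Re_eps0 : 0 < complex.Re eps by move: eps0; rewrite ltcE => /andP[].
have [N hN] := cauchy _ Re_eps0.
by exists N => n m hn hm; rewrite sqnormE (ge0_ReC (ltW eps0)) ltcR hN.
Qed.

Lemma sqnorm_small_eq0 w : (forall e : R, 0 < e -> sqnorm w < e) -> w = 0.
Proof.
by move=> small; apply/sqnorm_eq0/small_real_eq0 => e /small; rewrite ger0_norm ?sqnorm_ge0.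
Qed.

End HilbertSpace.

Section LinearOperator.
Variables (R : realType) (H : lmodType R[i]) (T : H -> H).
Hypothesis hT : linear_op T.

Lemma linear_opD x y : T (x + y) = T x + T y.
Proof. by have := hT 1 x y; rewrite !scale1r. Qed.
Lemma linear_op0 : T 0 = 0.
Proof. by apply/(addrI (T 0)); rewrite -linear_opD !addr0. Qed.
Lemma linear_opZ c x : T (c *: x) = c *: T x.
Proof. by have := hT c x 0; rewrite !addr0 linear_op0 addr0. Qed.
Lemma linear_opN x : T (- x) = - T x.
Proof. by rewrite -scaleN1r linear_opZ scaleN1r. Qed.
Lemma linear_opB x y : T (x - y) = T x - T y.
Proof. by rewrite linear_opD linear_opN. Qed.
Lemma linear_op_sum I (s : seq I) (F : I -> H) :
  T (\sum_(i <- s) F i) = \sum_(i <- s) T (F i).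
Proof. by elim: s => [|a s IH]; rewrite ?big_nil ?linear_op0 // !big_cons linear_opD IH. Qed.

Lemma linear_op_iter k : linear_op (iter k T).
Proof. by elim: k => [|k IH] c x y //=; rewrite IH hT. Qed.

End LinearOperator.

Section PositiveOperator.
Variables (R : realType) (H : lmodType R[i]) (ip : H -> H -> R[i]).
Hypothesis hH : is_hilbert ip.
Local Notation hp := (ip_psd hH).

Definition selfadjoint (T : H -> H) := forall x y, ip (T x) y = ip x (T y).

Variable T : H -> H.
Hypotheses (hT : linear_op T) (T_ge0 : forall x, 0 <= ip x (T x)).

Lemma psd_selfadjoint : selfadjoint T.
Proof.
pose b x y := ip (T x) y - ip x (T y).
have b_diag x : ip (T x) x = ip x (T x) by rewrite (form_conj hp x) conjc_ge0.
have b_polar c x y : c * b x y + conjc c * b y x = 0.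
  have := b_diag (x + c *: y).
  rewrite linear_opD // linear_opZ // !(formDl hp) !(formDr hp) !(formZl hp) !(formZr hp).
  by rewrite !b_diag /b => /eqP; rewrite -subr_eq0 => /eqP <-; ring.
move=> x y; apply/eqP; rewrite -subr_eq0; apply/eqP.
have := b_polar 1 x y; rewrite conjc1 !mul1r => /polar_eq0; apply; exact: b_polar.
Qed.

Lemma op_form_psd : hermitian_psd (fun x y => ip x (T y)).
Proof.
split=> [c x y z|x y|//]; first by rewrite hT (formZDr hp).
by rewrite (form_conj hp) psd_selfadjoint.
Qed.

Lemma iter_selfadjoint k : selfadjoint (iter k T).
Proof. by elim: k => [|k IH] x y //=; rewrite psd_selfadjoint IH -iterSr. Qed.

Definition rayleigh x := complex.Re (ip x (T x)).

Lemma rayleighE x : ip x (T x) = (rayleigh x)%:C.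
Proof. exact/ge0_ReC/T_ge0. Qed.
Lemma rayleigh_ge0 x : 0 <= rayleigh x.
Proof. by rewrite -ler0c -rayleighE. Qed.
Lemma rayleighZ c x : rayleigh (c *: x) = complex.Re (c * conjc c) * rayleigh x.
Proof.
rewrite /rayleigh linear_opZ // (formZl hp) (formZr hp) rayleighE mulrCA mulrA.
by rewrite [c * _](ge0_ReC (mulcJ_ge0 c)); simpc.
Qed.

End PositiveOperator.

Section Orthonormal.
Variables (R : realType) (H : lmodType R[i]) (ip : H -> H -> R[i]).
Hypothesis hH : is_hilbert ip.
Local Notation hp := (ip_psd hH).

Definition orthonormal (B : set H) :=
  (forall e, B e -> ip e e = 1) /\ (forall e f, B e -> B f -> e <> f -> ip e f = 0).

Lemma normalize_vector x : x <> 0 -> exists c : R[i], ip (c *: x) (c *: x) = 1.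
Proof.
move=> x0; have nx0 := sqnorm_gt0 hH x0.
exists (Num.sqrt (sqnorm ip x))^-1%:C; rewrite sqnormE // sqnormZ // conjc_real.
rewrite -rmorphM /= -expr2 exprVn sqr_sqrtr ?sqnorm_ge0 // mulVf ?gt_eqF //.
Qed.

Lemma orthonormal_pairs (B : set H) :
  (forall e f, B e -> B f -> exists A, [/\ orthonormal A, A e & A f]) -> orthonormal B.
Proof.
move=> pairs; split=> [e Be|e f Be Bf].
  by have [A [[A1 _] Ae _]] := pairs e e Be Be; exact: A1.
by have [A [[_ Ao] Ae Af]] := pairs e f Be Bf; exact: Ao.
Qed.

Lemma orthonormalU1 (B : set H) u : orthonormal B -> ip u u = 1 ->
  (forall e, B e -> ip e u = 0) -> orthonormal (u |` B).
Proof.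
move=> [B1 Bo] u1 uB; split=> [e [->|/B1]//|e f [->|Be] [->|Bf] ef] //.
- by rewrite (form_conj hp) uB ?conjc0.
- exact: uB.
- exact: Bo.
Qed.

Lemma orthonormal_extend (S B0 : set H) :
  (forall c x, S x -> S (c *: x)) -> B0 `<=` S -> orthonormal B0 ->
  exists B, [/\ B0 `<=` B, B `<=` S, orthonormal B &
    forall x, S x -> (forall e, B e -> ip e x = 0) -> x = 0].
Proof.
move=> SZ B0S B0o.
pose P := [set A : set H | A `<=` S /\ orthonormal (B0 `|` A)].
have [A [[AS Ao] Amax]] : exists A, P A /\ forall A', A `<` A' -> ~ P A'.
  apply: Zorn_bigcup => F FP Ftot; split; first by move=> x [X /FP[XS _] /XS].
  apply: orthonormal_pairs => e f [Be|[X FX Xe]] [Bf|[Y FY Yf]].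
  - by exists B0; split.
  - by exists (B0 `|` Y); split; [exact: (FP Y FY).2|left|right].
  - by exists (B0 `|` X); split; [exact: (FP X FX).2|right|left].
  - have [XY|YX] := Ftot X Y FX FY.
      by exists (B0 `|` Y); split; [exact: (FP Y FY).2|right; exact: XY|right].
    by exists (B0 `|` X); split; [exact: (FP X FX).2|right|right; exact: YX].
exists (B0 `|` A); split=> //; first by move=> x [/B0S|/AS].
move=> x Sx xB; apply: contrapT => x0; have [c xc1] := normalize_vector x0.
have xcB e : (B0 `|` A) e -> ip e (c *: x) = 0.
  by move/xB; rewrite (formZr hp) => ->; rewrite mulr0.
have xcA : ~ A (c *: x).
  by move=> /(fun h => xcB _ (or_intror h)); rewrite xc1 => /eqP; rewrite oner_eq0.
apply: (Amax (c *: x |` A)); first split.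
- by move=> y Ay; right.
- by move=> /(_ (c *: x) (or_introl erefl)) /xcA.
split; first by move=> y [->|/AS]//; exact: SZ.
rewrite setUCA; exact: orthonormalU1.
Qed.

Lemma onb_extend (B0 : set H) : orthonormal B0 -> exists B, B0 `<=` B /\ onb ip B.
Proof.
move=> B0o; have [B [B0B _ [B1 Bo] Bmax]] :=
  orthonormal_extend (S := setT) (fun _ _ _ => I) (fun _ _ => I) B0o.
by exists B; split=> //; split=> //; split=> // x; exact: Bmax.
Qed.

End Orthonormal.

Section Summation.
Variables (R : realType) (H : lmodType R[i]).
Implicit Types (B : set H) (f g : H -> R[i]).

Lemma psum_le_subset f (s1 s2 : seq H) :
  uniq s1 -> uniq s2 -> {subset s1 <= s2} -> (forall x, x \in s2 -> 0 <= f x) ->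
  \sum_(e <- s1) f e <= \sum_(e <- s2) f e.
Proof.
move=> u1 u2 s12 f0.
have s1_filter : perm_eq [seq x <- s2 | x \in s1] s1.
  apply: uniq_perm; rewrite ?filter_uniq // => x.
  by rewrite mem_filter; case: (boolP (x \in s1)) => [/s12 ->|].
rewrite [X in _ <= X](bigID (fun x => x \in s1)) /=.
rewrite -[X in _ <= X + _]big_filter (perm_big _ s1_filter).
by rewrite lerDl big_seq_cond sumr_ge0 // => x /andP[/f0].
Qed.

Lemma has_sum_superset B f s (s1 : seq H) (eps : R[i]) : has_sum B f s -> 0 < eps ->
  (forall e, e \in s1 -> B e) -> exists s2 : seq H,
  [/\ uniq s2, {subset s1 <= s2}, (forall e, e \in s2 -> B e) &
      `|\sum_(e <- s2) f e - s| < eps].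
Proof.
move=> fs /fs[s0 [_ [B0 near]]] B1; exists (undup (s1 ++ s0)).
have B2 e : e \in undup (s1 ++ s0) -> B e by rewrite mem_undup mem_cat => /orP[/B1|/B0].
split=> //; first exact: undup_uniq.
- by move=> e es; rewrite mem_undup mem_cat es.
- by apply: near => //; [exact: undup_uniq|move=> e es; rewrite mem_undup mem_cat es orbT].
Qed.

Lemma has_sum_psum_le B f s (s1 : seq H) : has_sum B f s -> (forall e, B e -> 0 <= f e) ->
  uniq s1 -> (forall e, e \in s1 -> B e) -> \sum_(e <- s1) f e <= s.
Proof.
move=> fs f0 u1 B1; apply: le_approxC => e e0.
have e0' : 0 < e%:C by rewrite ltcR.
have [s2 [u2 s12 B2 near]] := has_sum_superset fs e0' B1.
by exists (\sum_(x <- s2) f x) => //; apply: psum_le_subset => // x /B2 /f0.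
Qed.

Lemma has_sumB B f g s t : has_sum B f s -> has_sum B g t ->
  has_sum B (fun e => f e - g e) (s - t).
Proof.
move=> fs gt eps eps0; have eps20 : 0 < eps / 2 by rewrite divr_gt0.
have [s0 [_ [B0 near0]]] := fs _ eps20; have [s1 [_ [B1 near1]]] := gt _ eps20.
exists (undup (s0 ++ s1)); split; first exact: undup_uniq.
split=> [e|s3 u3 sub3 B3]; first by rewrite mem_undup mem_cat => /orP[/B0|/B1].
have sub e : e \in s0 ++ s1 -> e \in s3 by move=> es; apply: sub3; rewrite mem_undup.
rewrite sumrB (_ : _ - (s - t) = (\sum_(e <- s3) f e - s) - (\sum_(e <- s3) g e - t)); last by ring.
rewrite (splitr eps); apply: le_lt_trans (ler_normB _ _) _; apply: ltrD.
  by apply: near0 => // e es; apply: sub; rewrite mem_cat es.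
by apply: near1 => // e es; apply: sub; rewrite mem_cat es orbT.
Qed.

Lemma has_sumZ B f s (c : R[i]) : has_sum B f s -> has_sum B (fun e => c * f e) (c * s).
Proof.
move=> fs eps eps0; have c1 : 0 < `|c| + 1 by rewrite ltr_wpDl.
have [s0 [u0 [B0 near]]] := fs _ (divr_gt0 eps0 c1).
exists s0; split=> //; split=> // s1 u1 sub1 B1.
rewrite -mulr_sumr -mulrBr normrM.
apply: le_lt_trans (_ : _ <= (`|c| + 1) * `|\sum_(e <- s1) f e - s|) _.
  by rewrite ler_wpM2r ?lerDl.
by rewrite -ltr_pdivlMl // mulrC; exact: near.
Qed.

End Summation.

Section Projection.
Variables (R : realType) (H : lmodType R[i]) (ip : H -> H -> R[i]).
Hypothesis hH : is_hilbert ip.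
Local Notation hp := (ip_psd hH).

Definition proj (s : seq H) x := \sum_(f <- s) ip f x *: f.

Variable s : seq H.
Hypotheses (s_uniq : uniq s) (s_on : orthonormal ip [set` s]).

Lemma ip_proj f x : f \in s -> ip f (proj s x) = ip f x.
Proof.
move=> fs; rewrite (form_sumr hp) (bigD1_seq f) //= (formZr hp) s_on.1 // mulr1.
rewrite big_seq_cond big1 ?addr0 // => g /andP[gs /eqP gf].
by rewrite (formZr hp) (s_on.2 f g) ?mulr0 // => fg; apply: gf.
Qed.

Lemma ip_sub_proj f x : f \in s -> ip f (x - proj s x) = 0.
Proof. by move=> fs; rewrite (formBr hp) ip_proj ?subrr. Qed.

Lemma sqnorm_sub_proj_le x : sqnorm ip (x - proj s x) <= sqnorm ip x.
Proof.
set y := x - proj s x.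
have y_proj : ip (proj s x) y = 0.
  rewrite /proj (form_suml hp) big_seq big1 // => f fs.
  by rewrite (formZl hp) ip_sub_proj ?mulr0.
have ex : x = proj s x + y by rewrite /y addrC subrK.
clearbody y.
have pythagoras : ip x x = ip (proj s x) (proj s x) + ip y y.
  rewrite {1 2}ex !(formDl hp) !(formDr hp) y_proj.
  by rewrite [ip y _](form_conj hp) y_proj conjc0 addr0 add0r.
move: pythagoras; rewrite !sqnormE // -rmorphD => /complexI.
by have := sqnorm_ge0 hH (proj s x); lra.
Qed.

End Projection.

Section PowerIteration.
Variables (R : realType) (H : lmodType R[i]) (ip : H -> H -> R[i]).
Hypothesis hH : is_hilbert ip.
Local Notation hp := (ip_psd hH).
Local Notation sqnorm := (sqnorm ip).

Variable T : H -> H.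
Hypotheses (hT : linear_op T) (T_ge0 : forall x, 0 <= ip x (T x)).
Local Notation rayleigh := (rayleigh ip T).

Variable K : set H.
Hypothesis K_lin : forall c x y, K x -> K y -> K (c *: x + y).
Hypothesis K_T : forall x, K x -> K (T x).
Hypothesis K_closed : forall u z, (forall k, K (u k)) -> hconv ip u z -> K z.
Hypothesis rayleigh_le : forall x, K x -> rayleigh x <= sqnorm x.

Lemma K_sub x y : K x -> K y -> K (x - y).
Proof. by move=> Kx Ky; rewrite addrC -scaleN1r; exact: K_lin. Qed.

Lemma K_iter k v : K v -> K (iter k T v).
Proof. by elim: k => [|k IH] //= /IH /K_T. Qed.

Lemma sqnorm_op_le_rayleigh y : K y -> sqnorm (T y) <= rayleigh y.
Proof.
move=> Ky; have := cauchy_schwarz (op_form_psd hH hT T_ge0) (T y) y.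
rewrite sqnormE // conjc_real !(rayleighE T_ge0) -!rmorphM lecR => cs.
have sq0 := sqnorm_ge0 hH (T y).
have [->|ny0] := eqVneq (sqnorm (T y)) 0; first exact: rayleigh_ge0.
rewrite -(ler_pM2l (_ : 0 < sqnorm (T y))) ?lt_def ?ny0 //.
apply: le_trans cs _; rewrite ler_wpM2r ?rayleigh_ge0 //; exact/rayleigh_le/K_T.
Qed.

Lemma sqnorm_op_le y : K y -> sqnorm (T y) <= sqnorm y.
Proof. by move=> Ky; apply: le_trans (sqnorm_op_le_rayleigh Ky) (rayleigh_le Ky). Qed.

Lemma sqnorm_iter_le k y : K y -> sqnorm (iter k T y) <= sqnorm y.
Proof.
elim: k => [//|k IH] Ky /=; apply: le_trans (IH Ky).
by apply: sqnorm_op_le; exact: K_iter.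
Qed.

Section Moments.
Variable v : H.
Hypothesis Kv : K v.

Definition moment j := complex.Re (ip v (iter j T v)).

Lemma ip_iter i j : ip (iter i T v) (iter j T v) = ip v (iter (i + j) T v).
Proof. by rewrite (iter_selfadjoint hH hT T_ge0) -iterD. Qed.

Lemma moment_even i : moment (i + i) = sqnorm (iter i T v).
Proof. by rewrite /moment -ip_iter. Qed.

Lemma moment_odd i : moment (i + i).+1 = rayleigh (iter i T v).
Proof. by rewrite /moment -addnS -ip_iter iterS. Qed.

Lemma momentE j : ip v (iter j T v) = (moment j)%:C.
Proof.
elim/even_odd_ind: j => i; rewrite /moment.
  by rewrite -ip_iter -sqnormE.
by rewrite -addnS -ip_iter iterS -(rayleighE T_ge0).
Qed.

Lemma moment_ge0 j : 0 <= moment j.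
Proof.
elim/even_odd_ind: j => i; first by rewrite moment_even sqnorm_ge0.
by rewrite moment_odd rayleigh_ge0.
Qed.

Lemma moment_le_pred j : moment j.+1 <= moment j.
Proof.
elim/even_odd_ind: j => i.
  by rewrite moment_odd moment_even; exact/rayleigh_le/K_iter.
have -> : (i + i).+2 = (i.+1 + i.+1)%N by rewrite addnS addSn.
rewrite moment_even moment_odd /=.
by apply: sqnorm_op_le_rayleigh; exact: K_iter.
Qed.

Lemma moment_le N j : (N <= j)%N -> moment j <= moment N.
Proof.
move=> /subnK <-; elim: (j - N)%N => [//|d IH].
by rewrite addSn; exact: le_trans (moment_le_pred _) IH.
Qed.

Lemma sqnorm_iterB k m :
  sqnorm (iter k T v - iter m T v) = moment (k + k) + moment (m + m) - 2 * moment (k + m).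
Proof.
rewrite /sqnorm (formBl hp) !(formBr hp) !ip_iter (addnC m k) !momentE.
by simpc => /=; lra.
Qed.

Lemma moment_cauchy e : 0 < e -> exists N, forall j k, (N <= j)%N -> (N <= k)%N ->
  moment j - moment k < e.
Proof.
move=> e0; have inf_moment : has_inf (range moment).
  by split; [exists (moment 0), 0|exists 0 => _ [j _ <-]; exact: moment_ge0].
have [_ [N _ <-] near] := inf_adherent e0 inf_moment.
exists N => j k /moment_le jN kN; have : inf (range moment) <= moment k.
  by apply: ge_inf; [case: inf_moment|exists k].
lra.
Qed.

Lemma power_iteration : exists z, [/\ K z, T z = z & hconv ip (fun k => iter k T v) z].
Proof.
have cauchy : hcauchy ip (fun k => iter k T v).
  apply: (hcauchy_sqnorm hH) => e e0; have e20 : 0 < e / 2 by rewrite divr_gt0.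
  have [N near] := moment_cauchy e20; exists N => n m nN mN.
  rewrite sqnorm_iterB.
  have := near (n + n)%N (n + m)%N; have := near (m + m)%N (n + m)%N.
  have le_N p q : (N <= p)%N -> (N <= p + q)%N by move=> /leq_trans; apply; rewrite leq_addr.
  by move=> /(_ (le_N _ _ mN) (le_N _ _ nN)) h1 /(_ (le_N _ _ nN) (le_N _ _ nN)) h2; lra.
have [z conv] := ip_complete hH cauchy.
have Kz : K z by apply: (K_closed _ conv) => k; exact: K_iter.
exists z; split=> //; apply/subr0_eq/(sqnorm_small_eq0 hH) => e e0.
have e40 : 0 < e / 4 by rewrite divr_gt0.
have [N near] := (hconvP hH _ _).1 conv _ e40.
have h1 := near N (leqnn N); have h2 := near N.+1 (leqnSn N).
have contr : sqnorm (T z - T (iter N T v)) <= sqnorm (iter N T v - z).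
  rewrite -(sqnormN hH (T z - _)) opprB -linear_opB //; apply: sqnorm_op_le.
  by apply: K_sub => //; exact: K_iter.
rewrite (_ : T z - z = (T z - T (iter N T v)) + (iter N.+1 T v - z)); last first.
  by rewrite iterS addrA subrK.
by apply: le_lt_trans (sqnormD_le hH _ _) _; lra.
Qed.

End Moments.

End PowerIteration.

Section NonzeroFixedPoint.
Variables (R : realType) (H : lmodType R[i]) (ip : H -> H -> R[i]).
Hypothesis hH : is_hilbert ip.
Local Notation hp := (ip_psd hH).
Local Notation sqnorm := (sqnorm ip).

Variable T : H -> H.
Hypotheses (hT : linear_op T) (T_ge0 : forall x, 0 <= ip x (T x)).
Local Notation rayleigh := (rayleigh ip T).

Variable K : set H.
Hypothesis K_lin : forall c x y, K x -> K y -> K (c *: x + y).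
Hypothesis K_T : forall x, K x -> K (T x).
Hypothesis K_closed : forall u z, (forall k, K (u k)) -> hconv ip u z -> K z.
Hypothesis rayleigh_le : forall x, K x -> rayleigh x <= sqnorm x.
Hypothesis rayleigh_sup :
  forall eta : R, 0 < eta -> exists x, [/\ K x, sqnorm x = 1 & 1 - eta < rayleigh x].
Hypothesis rayleigh_tail : exists s0 : seq H,
  [/\ uniq s0, orthonormal ip [set` s0],
      (forall f x, f \in s0 -> K x -> ip f x <> 0 -> K f) &
      forall y, K y -> (forall f, f \in s0 -> ip f y = 0) -> rayleigh y <= sqnorm y / 8].

Lemma K0 : K 0.
Proof.
have [x [Kx _ _]] := rayleigh_sup ltr01.
by rewrite -(subrr x); exact: K_sub.
Qed.

Lemma K_sum (s : seq H) (c : H -> R[i]) :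
  (forall f, f \in s -> c f <> 0 -> K f) -> K (\sum_(f <- s) c f *: f).
Proof.
elim: s => [|a s IH] Ks; first by rewrite big_nil; exact: K0.
rewrite big_cons; have Ks' := IH (fun f fs => Ks f (mem_cons_r a fs)).
have [->|ca] := eqVneq (c a) 0; first by rewrite scale0r add0r.
by apply: K_lin => //; apply: Ks (mem_head _ _) _; apply/eqP.
Qed.

Lemma rayleigh_pow_le x p : K x -> sqnorm x = 1 ->
  rayleigh x ^+ (2 ^ p.+1) <= sqnorm (iter (2 ^ p) T x).
Proof.
move=> Kx x1.
have moment_sqr j : moment ip T x j ^+ 2 <= moment ip T x (j + j).
  have := cauchy_schwarz hp x (iter j T x).
  rewrite (momentE hH hT T_ge0) (ip_iter hH hT T_ge0) (momentE hH hT T_ge0).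
  by rewrite sqnormE // x1 conjc_real -!rmorphM lecR mul1r expr2.
have ge0 j : 0 <= moment ip T x j by exact: moment_ge0.
rewrite -(moment_even hH hT T_ge0) (_ : rayleigh x = moment ip T x 1) //.
rewrite addnn -mul2n -expnS; elim: p => [|p IH]; first exact: moment_sqr 1%N.
rewrite [(2 ^ p.+2)%N]expnS mul2n -addnn exprD; apply: le_trans (moment_sqr _).
by rewrite expr2 ler_pM ?exprn_ge0 ?ge0.
Qed.

Lemma exists_iter_large N :
  exists x, [/\ K x, sqnorm x = 1 & 3 / 4 <= sqnorm (iter (2 ^ N) T x)].
Proof.
set n := (2 ^ N.+1)%N; have n1 : 1 <= n%:R :> R by rewrite ler1n expn_gt0.
set eta : R := (4 * n%:R)^-1.
have eta0 : 0 < eta by rewrite invr_gt0 mulr_gt0 //; lra.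
have eta1 : eta <= 1 by rewrite invf_le1; lra.
have [x [Kx x1 eta_x]] := rayleigh_sup eta0.
exists x; split=> //; apply: le_trans (rayleigh_pow_le N Kx x1).
have := bernoulli_ineq n (_ : 0 <= eta <= 1); rewrite (ltW eta0) eta1 => /(_ isT).
have -> : n%:R * eta = 1 / 4 by rewrite /eta; field; lra.
have : (1 - eta) ^+ n <= rayleigh x ^+ n by rewrite lerXn2r ?nnegrE; lra.
lra.
Qed.

Section TailContradiction.
Variable s0 : seq H.
Hypotheses (s0_uniq : uniq s0) (s0_on : orthonormal ip [set` s0]).
Hypothesis s0_K : forall f x, f \in s0 -> K x -> ip f x <> 0 -> K f.
Hypothesis s0_tail :
  forall y, K y -> (forall f, f \in s0 -> ip f y = 0) -> rayleigh y <= sqnorm y / 8.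
Hypothesis iter_cvg0 : forall v, K v -> hconv ip (fun k => iter k T v) 0.

Lemma K_proj x : K x -> K (proj ip s0 x).
Proof. by move=> Kx; apply: K_sum => f fs; exact: s0_K. Qed.

Lemma iter_compl_small k x : (0 < k)%N -> K x ->
  sqnorm (iter k T (x - proj ip s0 x)) <= sqnorm x / 8.
Proof.
move=> k0 Kx; set y := x - proj ip s0 x.
have Ky : K y by apply: K_sub => //; exact: K_proj.
have y_perp f : f \in s0 -> ip f y = 0 by exact: ip_sub_proj.
rewrite -(prednK k0) iterSr.
apply: le_trans (sqnorm_iter_le hH hT T_ge0 K_T rayleigh_le _ (K_T Ky)) _.
apply: le_trans (sqnorm_op_le_rayleigh hH hT T_ge0 K_T rayleigh_le Ky) _.
apply: le_trans (s0_tail Ky y_perp) _; rewrite ler_wpM2r ?invr_ge0 ?ler0n //.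
exact: sqnorm_sub_proj_le.
Qed.

Lemma iter_proj_small : exists N, forall k x, (N <= k)%N -> K x -> sqnorm x = 1 ->
  sqnorm (iter k T (proj ip s0 x)) <= 1 / 8.
Proof.
set m := size s0; set d : R := (8 * 2 ^+ m * (m%:R + 1))^-1.
have d0 : 0 < d by rewrite invr_gt0 !mulr_gt0 ?exprn_gt0 ?ltr_wpDl.
have [N small] : exists N, forall f k, f \in s0 -> (N <= k)%N -> K f ->
    sqnorm (iter k T f) < d.
  apply: eventually_seq => f fs; have [Kf|nKf] := pselect (K f); last by exists 0%N.
  have [N near] := (hconvP hH _ _).1 (iter_cvg0 Kf) _ d0.
  by exists N => k /near; rewrite subr0.
exists N => k x Nk Kx x1; have hTk := linear_op_iter hT k.
have term_le f : f \in s0 -> sqnorm (ip f x *: iter k T f) <= d.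
  move=> fs; rewrite sqnormZ //.
  have [->|/eqP fx0] := eqVneq (ip f x) 0; first by rewrite mul0r /= mul0r ltW.
  have c0 : 0 <= complex.Re (ip f x * conjc (ip f x)) by exact: ler_ReC (mulcJ_ge0 _).
  have c1 : complex.Re (ip f x * conjc (ip f x)) <= 1.
    by have := ler_ReC (cauchy_schwarz hp f x); rewrite s0_on.1 // sqnormE // x1 mul1r.
  have := small f k fs Nk (s0_K fs Kx fx0); have := sqnorm_ge0 hH (iter k T f).
  nra.
have sum_le : \sum_(f <- s0) sqnorm (ip f x *: iter k T f) <= m%:R * d.
  have -> : m%:R * d = \sum_(f <- s0) d.
    by rewrite big_const_seq count_predT iter_addr addr0 mulr_natl.
  by rewrite big_seq [X in _ <= X]big_seq; apply: ler_sum.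
rewrite /proj (linear_op_sum hTk); under eq_bigr do rewrite (linear_opZ hTk).
apply: le_trans (sqnorm_sum_le hH _ _) _.
have -> : 1 / 8 = 2 ^+ m * (m%:R * d) + 2 ^+ m * d.
  by rewrite /d; field; rewrite natr1 pnatr_eq0 expf_neq0 ?pnatr_eq0.
have : 0 <= 2 ^+ m * d by rewrite mulr_ge0 ?exprn_ge0 ?ltW.
rewrite -/m; nra.
Qed.

Lemma tail_contradiction : False.
Proof.
have [N small] := iter_proj_small.
have [x [Kx x1 large]] := exists_iter_large N.
have := sqnormD_le hH (iter (2 ^ N) T (proj ip s0 x)) (iter (2 ^ N) T (x - proj ip s0 x)).
rewrite -linear_opD ?subrKC; last exact: linear_op_iter.
have := small _ x (ltnW (ltn_expl N (ltnSn 1))) Kx x1.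
have := iter_compl_small (expn_gt0 2 N) Kx; rewrite x1; lra.
Qed.

End TailContradiction.

Lemma exists_nonzero_fixed_point : exists z, [/\ K z, z <> 0 & T z = z].
Proof.
have [v [Kv not_cvg0]] : exists v, K v /\ ~ hconv ip (fun k => iter k T v) 0.
  apply: contrapT => none; have [s0 [s0_uniq s0_on s0_K s0_tail]] := rayleigh_tail.
  apply: (tail_contradiction s0_uniq s0_on s0_K s0_tail) => v Kv.
  by apply: contrapT => not_cvg0; apply: none; exists v.
have [z [Kz Tz cvg]] := power_iteration hH hT T_ge0 K_lin K_T K_closed rayleigh_le Kv.
by exists z; split=> // z0; apply: not_cvg0; rewrite -z0.
Qed.

End NonzeroFixedPoint.

Section PositiveKernel.
Variables (R : realType) (H : lmodType R[i]) (ip : H -> H -> R[i]).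
Hypothesis hH : is_hilbert ip.
Local Notation hp := (ip_psd hH).

Lemma rayleigh_eq0_ker T x : linear_op T -> (forall x, 0 <= ip x (T x)) ->
  rayleigh ip T x = 0 -> T x = 0.
Proof.
move=> hT T_ge0 rx0; apply/(sqnorm_eq0 hH)/le_anti; rewrite sqnorm_ge0 // andbT.
have := cauchy_schwarz (op_form_psd hH hT T_ge0) (T x) x.
rewrite sqnormE // conjc_real !(rayleighE T_ge0) rx0 mulr0 -rmorphM lecR.
by have := sqnorm_ge0 hH (T x); nra.
Qed.

Lemma hconv_orth e u z : (forall k, ip e (u k) = 0) -> hconv ip u z -> ip e z = 0.
Proof.
move=> u_perp conv; set w := ip e z.
have ww0 : complex.Re (w * conjc w) = 0.
  apply: small_real_eq0 => eps eps0.
  have e1 : 0 < sqnorm ip e + 1 by rewrite ltr_wpDl ?sqnorm_ge0.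
  have [N near] := (hconvP hH _ _).1 conv _ (divr_gt0 eps0 e1).
  have cs := ler_ReC (cauchy_schwarz hp e (z - u N)).
  rewrite (formBr hp) u_perp subr0 -/w !sqnormE // -rmorphM /= in cs.
  have := near N (leqnn N); rewrite -(sqnormN hH (u N - z)) opprB ltr_pdivlMr // => small.
  have := sqnorm_ge0 hH e; have := sqnorm_ge0 hH (z - u N).
  rewrite ger0_norm; last exact: (ler_ReC (mulcJ_ge0 w)).
  nra.
have : w * conjc w = 0 by rewrite (ge0_ReC (mulcJ_ge0 w)) ww0.
by move/eqP; rewrite mulf_eq0 conjc_eq0 orbb => /eqP.
Qed.

End PositiveKernel.

Section State.
Variables (R : realType) (H : lmodType R[i]) (ip : H -> H -> R[i]).
Hypothesis hH : is_hilbert ip.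
Local Notation hp := (ip_psd hH).
Local Notation sqnorm := (sqnorm ip).

Variable alpha : H -> H.
Hypothesis alpha_state : state ip alpha.
Let alpha_lin : linear_op alpha := alpha_state.1.1.
Let alpha_ge0 : forall x, 0 <= ip x (alpha x) := alpha_state.2.1.
Let alpha_tr : trace_is ip alpha 1 := alpha_state.2.2.
Local Notation ra := (rayleigh ip alpha).

Lemma rayleigh_state_le_compl (s0 : seq H) y : uniq s0 -> orthonormal ip [set` s0] ->
  (forall e, e \in s0 -> ip e y = 0) ->
  ra y <= (1 - complex.Re (\sum_(e <- s0) ip e (alpha e))) * sqnorm y.
Proof.
move=> s0_uniq s0_on y_perp.
have [->|/eqP y0] := eqVneq y 0.
  by rewrite sqnorm0 // mulr0 /rayleigh linear_op0 // (form0r hp).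
have [c yc1] := normalize_vector hH y0.
have yc_perp e : e \in s0 -> ip e (c *: y) = 0.
  by move/y_perp; rewrite (formZr hp) => ->; rewrite mulr0.
have yc_notin : c *: y \notin s0.
  by apply/negP => /yc_perp; rewrite yc1 => /eqP; rewrite oner_eq0.
have [B [sB onbB]] : exists B, [set` c *: y :: s0] `<=` B /\ onb ip B.
  by apply: onb_extend; rewrite // set_seq_cons; exact: orthonormalU1.
have := has_sum_psum_le (alpha_tr onbB) (fun e _ => alpha_ge0 e) (_ : uniq (c *: y :: s0)) sB.
rewrite /= yc_notin s0_uniq big_cons => /(_ isT) /ler_ReC.
rewrite raddfD /= -/(rayleigh ip alpha (c *: y)) (rayleighZ hH) //.
have := sqnormZ hH c y; rewrite /sqnorm yc1 /=.
set k := complex.Re (c * conjc c) => k1 le1.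
have := sqnorm_ge0 hH y; have := rayleigh_ge0 alpha_ge0 y; rewrite -/(sqnorm y); nra.
Qed.

Lemma rayleigh_state_le y : ra y <= sqnorm y.
Proof.
have nil_on : orthonormal ip [set` [::]] by split.
have := @rayleigh_state_le_compl [::] y isT nil_on.
by rewrite big_nil subr0 mul1r; apply.
Qed.

Lemma rayleigh_state_tail (B : set H) (eps : R) : onb ip B -> 0 < eps ->
  exists s0 : seq H, [/\ uniq s0, (forall f, f \in s0 -> B f) &
    forall y, (forall f, f \in s0 -> ip f y = 0) -> ra y <= eps * sqnorm y].
Proof.
move=> onbB eps0; have eps0' : 0 < eps%:C by rewrite ltcR.
have [s0 [s0_uniq [s0B near]]] := alpha_tr onbB eps0'.
exists s0; split=> // y y_perp.
have [/= near_Re _] := ltC_parts (near s0 s0_uniq (fun _ e => e) s0B).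
have s0_on : orthonormal ip [set` s0].
  by split=> [f /s0B /onbB.1|f g /s0B Bf /s0B Bg]; [|exact: onbB.2.1].
apply: le_trans (rayleigh_state_le_compl s0_uniq s0_on y_perp) _.
rewrite ler_wpM2r ?sqnorm_ge0 //; move: near_Re; rewrite raddfB /= ltr_norml; lra.
Qed.

End State.

Section Eigenbasis.
Variables (R : realType) (H : lmodType R[i]) (ip : H -> H -> R[i]).
Hypothesis hH : is_hilbert ip.
Local Notation hp := (ip_psd hH).
Local Notation sqnorm := (sqnorm ip).

Variable alpha : H -> H.
Hypothesis alpha_state : state ip alpha.
Let alpha_lin : linear_op alpha := alpha_state.1.1.
Let alpha_ge0 : forall x, 0 <= ip x (alpha x) := alpha_state.2.1.
Let alpha_tr : trace_is ip alpha 1 := alpha_state.2.2.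
Let alpha_sa : selfadjoint ip alpha := psd_selfadjoint hH alpha_lin alpha_ge0.
Local Notation ra := (rayleigh ip alpha).

Definition eigenvector x := exists mu : R[i], alpha x = mu *: x.

Section OrthogonalComplement.
Variable E : set H.
Hypotheses (E_on : orthonormal ip E) (E_eig : forall e, E e -> eigenvector e).

Definition orth x := forall e, E e -> ip e x = 0.

Lemma orth_lin c x y : orth x -> orth y -> orth (c *: x + y).
Proof. by move=> x_perp y_perp e Ee; rewrite (formZDr hp) x_perp ?y_perp ?mulr0 ?addr0. Qed.

Lemma orthZ c x : orth x -> orth (c *: x).
Proof.
by move=> x_perp; rewrite -[c *: x]addr0; apply: orth_lin => // e _; rewrite (form0r hp).
Qed.

Lemma orth_alpha x : orth x -> orth (alpha x).
Proof.
move=> x_perp e Ee; have [mu mu_e] := E_eig Ee.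
by rewrite -alpha_sa mu_e (formZl hp) x_perp ?mulr0.
Qed.

Lemma orth_closed u z : (forall k, orth (u k)) -> hconv ip u z -> orth z.
Proof. by move=> u_perp conv e Ee; exact: (hconv_orth hH (fun k => u_perp k e Ee) conv). Qed.

Lemma orth_tail (eps : R) : 0 < eps -> exists s0 : seq H,
  [/\ uniq s0, orthonormal ip [set` s0],
      (forall f x, f \in s0 -> orth x -> ip f x <> 0 -> orth f) &
      forall y, orth y -> (forall f, f \in s0 -> ip f y = 0) -> ra y <= eps * sqnorm y].
Proof.
move=> eps0; have [B [EB onbB]] := onb_extend hH E_on.
have [s0 [s0_uniq s0B tail]] := rayleigh_state_tail hH alpha_state onbB eps0.
exists s0; split=> //.
- by split=> [f /s0B /onbB.1|f g /s0B Bf /s0B Bg]; [|exact: onbB.2.1].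
- move=> f x fs x_perp fx0 e Ee; have [Ef|nEf] := pselect (E f); first by case: fx0; exact: x_perp.
  by apply: onbB.2.1 (EB _ Ee) (s0B _ fs) _ => ef; apply: nEf; rewrite -ef.
- by move=> y _; exact: tail.
Qed.

Variable x0 : H.
Hypotheses (x0_orth : orth x0) (x0_neq0 : x0 <> 0).

Definition rayleigh_quotients :=
  [set r | exists2 y, orth y & 0 < sqnorm y /\ r = ra y / sqnorm y].
Definition rq_sup := sup rayleigh_quotients.

Lemma has_sup_rq : has_sup rayleigh_quotients.
Proof.
split; first by exists (ra x0 / sqnorm x0), x0 => //; split=> //; exact: sqnorm_gt0.
exists 1 => r [y _ [y0 ->]]; rewrite ler_pdivrMr // mul1r.
by have := rayleigh_state_le hH alpha_state y.
Qed.

Lemma rq_sup_ub y : orth y -> ra y <= rq_sup * sqnorm y.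
Proof.
move=> y_perp; have [->|/eqP y0] := eqVneq y 0.
  by rewrite sqnorm0 // mulr0 /rayleigh linear_op0 // (form0r hp).
rewrite -ler_pdivrMr ?sqnorm_gt0 //; apply: (sup_upper_bound has_sup_rq).
by exists y => //; split=> //; exact: sqnorm_gt0.
Qed.

Lemma rq_sup_gt0 : 0 < ra x0 -> 0 < rq_sup.
Proof.
move=> ra0; have x0_rq : rayleigh_quotients (ra x0 / sqnorm x0).
  by exists x0 => //; split=> //; exact: sqnorm_gt0.
by apply: lt_le_trans (sup_upper_bound has_sup_rq x0_rq); rewrite divr_gt0 ?sqnorm_gt0.
Qed.

Lemma rq_sup_approx eta : 0 < eta ->
  exists x, [/\ orth x, sqnorm x = 1 & rq_sup - eta < ra x].
Proof.
move=> eta0; have [r [y y_perp [y0 ->]] near] := sup_adherent eta0 has_sup_rq.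
have /eqP y0' : y != 0 by apply/eqP => y_eq0; move: y0; rewrite y_eq0 sqnorm0 // ltxx.
have [c yc1] := normalize_vector hH y0'.
have k_inv : complex.Re (c * conjc c) = (sqnorm y)^-1.
  apply: (mulIf (lt0r_neq0 y0)); rewrite mulVf ?lt0r_neq0 //.
  by rewrite -sqnormZ // /sqnorm yc1.
exists (c *: y); split; [exact: orthZ|by rewrite /sqnorm yc1|].
by rewrite (rayleighZ hH) // k_inv mulrC.
Qed.

Lemma rayleigh_scaled (r : R) x :
  rayleigh ip (fun v => r%:C *: alpha v) x = r * ra x.
Proof. by rewrite /rayleigh (formZr hp) (rayleighE alpha_ge0); simpc. Qed.

Lemma eigenvector_orth : exists z, [/\ orth z, z <> 0 & eigenvector z].
Proof.
have [ra0|ra_neq0] := eqVneq (ra x0) 0.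
  exists x0; split=> //; exists 0; rewrite scale0r.
  exact (rayleigh_eq0_ker hH alpha_lin alpha_ge0 ra0).
have lam0 : 0 < rq_sup by apply: rq_sup_gt0; rewrite lt_def ra_neq0 rayleigh_ge0.
set lam := rq_sup in lam0 *; pose T v := (lam^-1)%:C *: alpha v.
have hT : linear_op T by move=> c u w; rewrite /T alpha_lin scalerDr !scalerA mulrC.
have T_ge0 u : 0 <= ip u (T u).
  by rewrite (formZr hp) mulr_ge0 ?alpha_ge0 // ler0c invr_ge0 ltW.
have raT u : rayleigh ip T u = lam^-1 * ra u by exact: rayleigh_scaled.
have orth_T u : orth u -> orth (T u) by move/orth_alpha; exact: orthZ.
have T_le u : orth u -> rayleigh ip T u <= sqnorm u.
  by move=> u_perp; rewrite raT ler_pdivrMl //; exact: rq_sup_ub.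
have T_sup eta : 0 < eta -> exists x, [/\ orth x, sqnorm x = 1 & 1 - eta < rayleigh ip T x].
  move=> eta0; have [x [x_perp x1 near]] := rq_sup_approx (mulr_gt0 lam0 eta0).
  by exists x; split=> //; rewrite raT ltr_pdivlMl // -/lam in near *; lra.
have T_tail : exists s0 : seq H, [/\ uniq s0, orthonormal ip [set` s0],
    (forall f x, f \in s0 -> orth x -> ip f x <> 0 -> orth f) &
    forall y, orth y -> (forall f, f \in s0 -> ip f y = 0) ->
      rayleigh ip T y <= sqnorm y / 8].
  have [s0 [s0_uniq s0_on s0_orth tail]] := orth_tail (divr_gt0 lam0 (ltr0n _ 8)).
  exists s0; split=> // y y_perp y_s0; rewrite raT ler_pdivrMl //.
  by rewrite -/lam mulrA mulrAC; exact: tail.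
have [z [z_perp z0 Tz]] := exists_nonzero_fixed_point hH hT T_ge0 orth_lin orth_T
  orth_closed T_le T_sup T_tail.
exists z; split=> //; exists lam%:C.
by rewrite -{2}Tz /T scalerA -rmorphM /= divff ?lt0r_neq0 // scale1r.
Qed.

End OrthogonalComplement.

Lemma state_eigenbasis : exists E, onb ip E /\ forall e, E e -> eigenvector e.
Proof.
have eigZ c x : eigenvector x -> eigenvector (c *: x).
  by move=> [mu mu_x]; exists mu; rewrite linear_opZ // mu_x !scalerA mulrC.
have set0_on : orthonormal ip set0 by [].
have [E [_ E_eig E_on E_max]] := orthonormal_extend hH eigZ (sub0set _) set0_on.
exists E; split=> //; split; first exact: E_on.1.
split=> [|x0 x0_perp]; first exact: E_on.2.
apply: contrapT => x0_neq0.
have [z [z_perp z0 z_eig]] := eigenvector_orth E_on E_eig x0_perp x0_neq0.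
by apply: z0; exact: E_max.
Qed.

Lemma psum_state_effect (E : set H) (a : H -> H) (s : seq H) :
  onb ip E -> (forall e, E e -> eigenvector e) -> effect ip a ->
  uniq s -> (forall e, e \in s -> E e) -> 0 <= \sum_(e <- s) ip e (alpha (a e)) <= 1.
Proof.
move=> onbE E_eig [_ a01] s_uniq sE.
have term_le e : E e -> 0 <= ip e (alpha (a e)) <= ip e (alpha e).
  move=> Ee; have [mu mu_e] := E_eig _ Ee; have [ae0 ae1] := a01 e.
  have mu_ra : mu = (ra e)%:C.
    by rewrite -(rayleighE alpha_ge0) mu_e (formZr hp) onbE.1 // mulr1.
  rewrite -alpha_sa mu_e (formZl hp) (formZr hp) onbE.1 // mulr1 mu_ra conjc_real.
  by rewrite mulr_ge0 ?ler0c ?rayleigh_ge0 // ler_piMr ?ler0c ?rayleigh_ge0 -?(onbE.1 e).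
apply/andP; split; first by rewrite big_seq sumr_ge0 // => e /sE /term_le /andP[].
apply: le_trans (has_sum_psum_le (alpha_tr onbE) (fun e _ => alpha_ge0 e) s_uniq sE).
by rewrite big_seq [X in _ <= X]big_seq; apply: ler_sum => e /sE /term_le /andP[].
Qed.

Lemma trace_state_effect (a : H -> H) (t : R[i]) :
  effect ip a -> trace_is ip (alpha \o a) t -> 0 <= t /\ t <= 1.
Proof.
move=> a_eff tr_t; have [E [onbE E_eig]] := state_eigenbasis.
have near eps : 0 < eps -> exists2 s, 0 <= \sum_(e <- s) ip e (alpha (a e)) <= 1 &
    `|\sum_(e <- s) ip e (alpha (a e)) - t| < eps%:C.
  move=> eps0; have eps0' : 0 < eps%:C by rewrite ltcR.
  have [s [s_uniq [sE near]]] := tr_t E onbE _ eps0'.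
  exists s; first exact: (psum_state_effect onbE E_eig a_eff s_uniq sE).
  exact: (near s s_uniq (fun _ e => e) sE).
split; [apply: le_approxC|apply: ge_approxC] => eps /near[s /andP[ge0 le1] near_s].
  by exists (\sum_(e <- s) ip e (alpha (a e))).
by exists (\sum_(e <- s) ip e (alpha (a e))).
Qed.

End Eigenbasis.

Section Effects.
Variables (R : realType) (H : lmodType R[i]) (ip : H -> H -> R[i]).
Hypothesis hH : is_hilbert ip.
Local Notation hp := (ip_psd hH).

Lemma effect_id : effect ip id.
Proof.
split; first by split=> //; exists 1; split=> // x; rewrite mul1r.
by move=> x; split=> //; exact: (form_ge0 hp).
Qed.

Lemma effectZ a (c : R[i]) : effect ip a -> 0 <= c -> c <= 1 -> effect ip (fun x => c *: a x).
Proof.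
move=> [[a_lin [M [M0 a_bd]]] a01] c0 c1; have [r [-> r0 r1]] := complex01_real c0 c1.
have rr1 : (r * r)%:C <= 1 by rewrite -[1]/(1%:C) lecR; nra.
split; first split.
- by move=> k x y; rewrite a_lin scalerDr !scalerA mulrC.
- exists M; split=> // x; rewrite (formZl hp) (formZr hp) conjc_real mulrA -rmorphM /=.
  by apply: le_trans (a_bd x); rewrite ler_piMl ?(form_ge0 hp).
- move=> x; rewrite (formZr hp); have [ax0 ax1] := a01 x; split; first by rewrite mulr_ge0 ?ler0c.
  by apply: le_trans ax1; rewrite ler_piMl // -[1]/(1%:C) lecR.
Qed.

Lemma effect_compl a : effect ip a -> effect ip (fun x => x - a x).
Proof.
move=> [[a_lin [M [M0 a_bd]]] a01]; rewrite (ge0_ReC M0) in a_bd.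
have M0' : 0 <= complex.Re M by rewrite -ler0c -ge0_ReC.
split; first split.
- by move=> k x y; rewrite a_lin scalerBr opprD !addrA [_ - _ + y]addrAC.
- exists (2 + 2 * complex.Re M)%:C; split=> [|x]; first by rewrite ler0c; lra.
  have := a_bd x; rewrite !sqnormE // -!rmorphM !lecR => ax.
  by apply: le_trans (sqnormB_le hH _ _) _; lra.
- by move=> x; have [ax0 ax1] := a01 x; rewrite (formBr hp) subr_ge0 gerBl.
Qed.

Lemma sub_observableZ (d : measure_display) (Omega : measurableType d)
    (M : set Omega -> H -> H) (c : R[i]) :
  sub_observable ip M -> 0 <= c -> c <= 1 -> sub_observable ip (fun D x => c *: M D x).
Proof.
move=> [M_eff M_add] c0 c1; have [r [cr r0 r1]] := complex01_real c0 c1.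
split=> [D mD|F mF tF x]; first exact: effectZ (M_eff D mD) c0 c1.
apply/(hconvP hH) => e e0; have [N near] := (hconvP hH _ _).1 (M_add F mF tF x) e e0.
exists N => n /near; rewrite -scaler_sumr -scalerBr sqnormZ // cr conjc_real -rmorphM /=.
by apply: le_lt_trans; rewrite ler_piMl ?sqnorm_ge0 //; nra.
Qed.

End Effects.

Section HolevoDual.
Variables (R : realType) (H : lmodType R[i]) (ip : H -> H -> R[i]).
Hypothesis hH : is_hilbert ip.
Local Notation hp := (ip_psd hH).
Variables (d : measure_display) (Omega : measurableType d).
Variables (alpha : H -> H) (A : set Omega -> H -> H).
Hypotheses (alpha_state : state ip alpha) (A_obs : observable ip A).
Let alpha_lin : linear_op alpha := alpha_state.1.1.
Let alpha_tr : trace_is ip alpha 1 := alpha_state.2.2.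
Local Notation U := (holevo_dual_set ip alpha A).
Local Notation Z := (fun D x => 1 *: A D x).

Lemma state_unit_vector : exists e, ip e e = 1.
Proof.
have set0_on : orthonormal ip set0 by [].
have [B [_ onbB]] := onb_extend hH set0_on.
have [[|e s0] [_ [s0B near]]] := alpha_tr onbB ltr01.
  by have := near [::] isT (fun _ e => e) s0B; rewrite big_nil sub0r normrN normr1 ltxx.
by exists e; apply: onbB.1; apply: s0B; rewrite mem_head.
Qed.

Lemma holevo_dual_sub_observable M : U M -> sub_observable ip M.
Proof.
move=> [a [a_eff [t [tr_t ->]]]]; have [t0 t1] := trace_state_effect hH alpha_state a_eff tr_t.
exact: sub_observableZ A_obs.1 t0 t1.
Qed.

Lemma holevo_dual_unit : U Z.
Proof. by exists id; split; [exact: effect_id|exists 1]. Qed.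

Lemma holevo_dual_unit_observable : observable ip Z.
Proof.
split; first exact: sub_observableZ A_obs.1 ler01 (lexx _).
by apply: funext => x; rewrite A_obs.2 scale1r.
Qed.

Lemma holevo_dual_compl M : U M -> U (opmap_sub Z M).
Proof.
move=> [a [a_eff [t [tr_t ->]]]]; exists (fun x => x - a x); split; first exact: effect_compl.
exists (1 - t); split; last by apply: funext => D; apply: funext => x; rewrite /opmap_sub scalerBl.
move=> B onbB; have := has_sumB (alpha_tr onbB) (tr_t B onbB).
congr has_sum; apply: funext => e /=.
by rewrite linear_opB // (formBr hp).
Qed.

Lemma holevo_dual_add M N : U M -> U N -> sub_observable ip (opmap_add M N) ->
  U (opmap_add M N).
Proof.
move=> [a [_ [t [tr_t ->]]]] [b [_ [s [tr_s ->]]]] [MN_eff _].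
have [e e1] := state_unit_vector.
have [ts0 ts1] : 0 <= t + s /\ t + s <= 1.
  have [_ eff] := MN_eff setT measurableT; have := eff e.
  by rewrite /opmap_add A_obs.2 (formDr hp) !(formZr hp) e1 !mulr1.
exists (fun x => (t + s) *: x); split; first exact: effectZ (effect_id hH) ts0 ts1.
exists (t + s); split; last by apply: funext => D; apply: funext => x; rewrite /opmap_add scalerDl.
move=> B onbB; have := has_sumZ (t + s) (alpha_tr onbB); rewrite mulr1.
congr has_sum; apply: funext => f /=.
by rewrite linear_opZ // (formZr hp).
Qed.

End HolevoDual.

Theorem theorem3p3 (R : realType) (H : lmodType R[i]) (ip : H -> H -> R[i])
  (hH : is_hilbert ip) (d : measure_display) (Omega : measurableType d)
  (alpha : H -> H) (A : set Omega -> H -> H) :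
  state ip alpha -> observable ip A ->
  Sob_effect_algebra ip (holevo_dual_set ip alpha A).
Proof.
move=> alpha_state A_obs; split; first exact: holevo_dual_sub_observable.
exists (fun D x => 1 *: A D x); split.
- exact: holevo_dual_unit.
- exact: holevo_dual_unit_observable.
- exact: holevo_dual_compl.
- exact: holevo_dual_add.
Qed.
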